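(* Let $P$ be any multiprogram in which each process is a single-threaded program accessing read/write variables from a set $V$, and let $K=\{V_1,\dots,V_m\}$ be any partition of a subset of $V$. Let $L(K)=\{1,\dots,m\}$. Then each of the two transformations $\mathrm{SWFR}$ and $\mathrm{FWSR}$ (described in the context) correctly implements the partition consistency model $\mathrm{PC}(K)$ on the partial-order broadcast model $\mathrm{POB}(L(K))$; i.e., for every finite computation $\widehat C$ of the transformed multiprogram that satisfies $\mathrm{POB}(L(K))$ and in which every transformed operation has completed, the interpretation $C$ of $\widehat C$ satisfies $\mathrm{PC}(K)$.
   Context: Framework. A thread issues a sequence of operation invocations (its program order). A process is a finite collection of threads; a multiprogram is a finite collection of processes. A computation of a multiprogram is obtained by completing every invocation with an arbitrary response; it is thus one sequence of completed operations per thread. $O_C$ is the set of operations of computation $C$; $O_C|p$ is the set of operations of process $p$; $O_C|\mathrm{wrts}$ is the set of all write operations; $O_C|\mathrm{wrts}(S)$ is the set of writes to variables in $S$. Program order $\to_{\mathrm{prog}}$ is the union of the per-thread total orders. A memory consistency model is a predicate on computations. Validity: a sequence of reads/writes on a variable is valid if each read returns the value of the most recent preceding write to that variable in the sequence (or the initial value if none); a sequence of operations on several objects is valid if its restriction to each object is valid. For broadcast objects, a sequence of bcast/deliver operations is valid if no deliver precedes its corresponding bcast (the bcast need not appear in the sequence) and no particular deliver occurs more than once. For relations $R,T$ and a set $A$: $\mathrm{Extends}[A,R,T]$ means $\forall a_1,a_2\in A: a_1 T a_2 \Rightarrow a_1 R a_2$; $\mathrm{Agree}[A,R,T]$ means $\forall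 a_1,a_2\in A: a_1 R a_2 \Leftrightarrow a_1 T a_2$. Partition consistency: for a partition $K=\{V_1,\dots,V_m\}$ of a subset of the shared variables, $\mathrm{PC}(K)(C)$ holds iff there exist, for every process $p$, a valid total order $\to_{L_p}$ on $O_C|p\cup O_C|\mathrm{wrts}$ such that for all $p$, $\mathrm{Extends}[O_C|p\cup O_C|\mathrm{wrts},\to_{L_p},\to_{\mathrm{prog}}]$, and for all $p,q$ and $i\in[1,m]$, $\mathrm{Agree}[O_C|\mathrm{wrts}(V_i),\to_{L_p},\to_{L_q}]$. Partial-order broadcast model: processes are multithreaded; threads of the same process share local variables; distinct processes communicate via unique update objects with operations $\mathrm{bcast}(u,l)$ (broadcast update $u$ with label $l\in L\cup\{\bot\}$, $\bot$ meaning unlabeled) and $\mathrm{deliver}$ returning some $(u,l)$. Define $x\to_{\mathrm{delOrder}} y$ iff $x=\mathrm{deliver}(u_1,l_1)$, $y=\mathrm{deliver}(u_2,l_2)$ and $\mathrm{bcast}(u_1,l_1)\to_{\mathrm{prog}}\mathrm{bcast}(u_2,l_2)$. $O_C|\mathrm{delivers}(l)$ is the set of delivers returning an update with label $l\neq\bot$. $\mathrm{POB}(L)(C)$ holds iff there exist, for each process $p$, a valid total order $\to_{L_p}$ on $O_C|p$ with $\mathrm{Extends}[O_C|p,\to_{L_p},\to_{\mathrm{prog}_p}\cup\to_{\mathrm{delOrder}}]$ for all $p$, $\mathrm{Agree}[O_C|\mathrm{delivers}(l),\to_{L_p},\to_{L_q}]$ for all $p,q$ and $l\in L$, and for every $p$: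 $\mathrm{bcast}(m,l)\in O_C$ iff $\mathrm{deliver}(m,l)\in O_C|p$. Correct implementation: a transformation $\tau$ maps a multiprogram $P$ to a target multiprogram $\tau(P)$, replacing each specified operation invocation by a target subroutine that returns a response (and possibly adding new threads). A computation $\widehat C$ of $\tau(P)$ is interpreted as the computation $C$ of $P$ in which each specified operation receives the response returned by its subroutine. $\tau$ correctly implements model $MC$ on target model $\widehat{MC}$ if, for every admissible $P$, the interpretation of every (finite, with all subroutines completed) computation of $\tau(P)$ satisfying $\widehat{MC}$ satisfies $MC$. The transformations. Each specified process $p$ becomes a target process $\widehat p$ with a main thread $\widehat p.m$ and a delivery thread $\widehat p.d$, sharing local variables: a replica $\mathrm{Memory}[\widehat p].x$ for each $x\in V$ (initially the initial value of $x$), and counters writes-requested and writes-processed (initially 0). In $\widehat p.m$: a read of $x$ returns $\mathrm{Memory}[\widehat p].x$; a write $\mathrm{write}(x,v)$ increments writes-requested, then performs $\mathrm{bcast}([x,v,\widehat p],i)$ if $x\in V_i$ for some $V_i\in K$, and $\mathrm{bcast}([x,v,\widehat p],\bot)$ otherwise. The procedure WaitWritesComplete busy-waits while writes-processed $<$ writes-requested. In SWFR, WaitWritesComplete is called at the end of every write; in FWSR it is instead called at the beginning of every read. The thread $\widehat p.d$ loops forever: perform a deliver returning $([x,v,\mathit{source}],l)$, set $\mathrm{Memory}[\widehat p].x\gets v$, and if $\mathit{source}=\widehat p$ increment writes-processed. *)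

From mathcomp Require Import all_boot.
Set Implicit Arguments. Unset Strict Implicit. Unset Printing Implicit Defensive.

Fixpoint get (A : Type) (s : seq A) (i : nat) : option A :=
  match s, i with
  | [::], _ => None
  | a :: _, 0 => Some a
  | _ :: s', i'.+1 => get s' i'
  end.

(* A duplicate-free list [s] enumerating exactly the (finite) set [D];
   it represents a total order on [D]. *)
Definition enumerates (Id : Type) (D : Id -> Prop) (s : seq Id) : Prop :=
  (forall i j a, get s i = Some a -> get s j = Some a -> i = j) /\
  (forall a, D a <-> exists i, get s i = Some a).

Definition before (Id : Type) (s : seq Id) (a b : Id) : Prop :=
  exists i j, (i < j)%N /\ get s i = Some a /\ get s j = Some b.

Definition valid_rw (Id Loc Val : Type)
    (isW isR : Id -> Loc -> Val -> Prop) (init : Loc -> Val) (s : seq Id) : Prop :=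
  forall k r l v, get s k = Some r -> isR r l v ->
    (exists j w, (j < k)%N /\ get s j = Some w /\ isW w l v /\
       (forall j' w' v', (j < j')%N -> (j' < k)%N -> get s j' = Some w' -> ~ isW w' l v'))
    \/ ((forall j w v', (j < k)%N -> get s j = Some w -> ~ isW w l v') /\ v = init l).

Section Spec.
Variables (Var Val : Type) (Proc : finType).

Inductive SInv := SRead of Var | SWrite of Var & Val.
Inductive SOp := SRd of Var & Val | SWr of Var & Val.

(* operation occurrence: (process, position in its thread) *)
Definition SId := (Proc * nat)%type.

Variable sc : Proc -> seq SOp.   (* a computation of the specified multiprogram *)

Definition slook (a : SId) : option SOp := get (sc a.1) a.2.
Definition inOs (p : Proc) (a : SId) : Prop := a.1 = p /\ exists o, slook a = Some o.
Definition isWrite (a : SId) : Prop := exists x v, slook a = Some (SWr x v).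
Definition progS (a b : SId) : Prop := a.1 = b.1 /\ (a.2 < b.2)%N.

Definition svalid (init : Var -> Val) (s : seq SId) : Prop :=
  valid_rw (fun a x v => slook a = Some (SWr x v))
           (fun a x v => slook a = Some (SRd x v)) init s.

(* Partition consistency PC(K); the partition K = {V_1..V_m} of a subset
   of the variables is given by blk : x |-> Some i iff x \in V_i. *)
Definition PC (m : nat) (blk : Var -> option 'I_m) (init : Var -> Val) : Prop :=
  exists S : Proc -> seq SId,
    (forall p,
       enumerates (fun a => inOs p a \/ isWrite a) (S p) /\
       svalid init (S p) /\
       (forall a b, (inOs p a \/ isWrite a) -> (inOs p b \/ isWrite b) ->
                    progS a b -> before (S p) a b)) /\
    (forall (i : 'I_m) p q w1 w2,
       (exists x v, slook w1 = Some (SWr x v) /\ blk x = Some i) ->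
       (exists x v, slook w2 = Some (SWr x v) /\ blk x = Some i) ->
       (before (S p) w1 w2 <-> before (S q) w1 w2)).
End Spec.

Inductive Thr := Main | Deliv.
Inductive Ctr := WR (* writes-requested *) | WP (* writes-processed *).
Inductive Variant := SWFR | FWSR.

Section Target.
Variables (Var Val : Type) (Proc : finType) (m : nat).

(* operation occurrence: (process, thread, position in the thread) *)
Definition TId := (Proc * Thr * nat)%type.

(* Local variables: Memory[p].x and the two
   counters.  An update object broadcast by the bcast occurrence b carrying
   [x,v,src] with label lab is delivered as  TDeliver b x v src lab
   (the occurrence b makes update objects unique). *)
Inductive TOp :=
| TRdM of Var & Val | TWrM of Var & Val
| TRdC of Ctr & nat | TWrC of Ctr & nat
| TBcast of Var & Val & Proc & option 'I_m
| TDeliver of TId & Var & Val & Proc & option 'I_m.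

(* WaitWritesComplete: while writes-processed < writes-requested do skip *)
Inductive Wait : seq TOp -> Prop :=
| WaitExit a b : (b <= a)%N -> Wait [:: TRdC WP a; TRdC WR b]
| WaitLoop a b rest : (a < b)%N -> Wait rest ->
    Wait [:: TRdC WP a, TRdC WR b & rest].

(* the target subroutine for one specified invocation, in process p,
   together with the interpreted (completed) specified operation *)
Inductive Subroutine (tau : Variant) (blk : Var -> option 'I_m) (p : Proc) :
    SInv Var Val -> seq TOp -> SOp Var Val -> Prop :=
| SubRead_SWFR x v : tau = SWFR ->
    Subroutine tau blk p (SRead Val x) [:: TRdM x v] (SRd x v)
| SubWrite_SWFR x v n w : tau = SWFR -> Wait w ->
    Subroutine tau blk p (SWrite x v)
        ([:: TRdC WR n; TWrC WR n.+1; TBcast x v p (blk x)] ++ w) (SWr x v)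
| SubRead_FWSR x v w : tau = FWSR -> Wait w ->
    Subroutine tau blk p (SRead Val x) (w ++ [:: TRdM x v]) (SRd x v)
| SubWrite_FWSR x v n : tau = FWSR ->
    Subroutine tau blk p (SWrite x v)
        [:: TRdC WR n; TWrC WR n.+1; TBcast x v p (blk x)] (SWr x v).

(* the main thread runs the whole program, every subroutine completed *)
Inductive MainRun (sub : SInv Var Val -> seq TOp -> SOp Var Val -> Prop) :
    seq (SInv Var Val) -> seq TOp -> seq (SOp Var Val) -> Prop :=
| MR_nil : MainRun sub [::] [::] [::]
| MR_cons i ops o iss ops' os : sub i ops o -> MainRun sub iss ops' os ->
    MainRun sub (i :: iss) (ops ++ ops') (o :: os).

Inductive DelivIter (p : Proc) : seq TOp -> Prop :=
| DI_own b x v lab n :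
    DelivIter p [:: TDeliver b x v p lab; TWrM x v; TRdC WP n; TWrC WP n.+1]
| DI_other b x v src lab : src <> p ->
    DelivIter p [:: TDeliver b x v src lab; TWrM x v].

(* a finite prefix of the infinite delivery loop *)
Inductive DelivRun (p : Proc) : seq TOp -> Prop :=
| DR_nil : DelivRun p [::]
| DR_stop pre rest : DelivIter p (pre ++ rest) -> DelivRun p pre
| DR_iter it ops : DelivIter p it -> DelivRun p ops -> DelivRun p (it ++ ops).

Variable tc : Proc -> Thr -> seq TOp.   (* a computation of the target *)

Definition tlook (a : TId) : option TOp := get (tc a.1.1 a.1.2) a.2.
Definition inO (p : Proc) (a : TId) : Prop := a.1.1 = p /\ exists o, tlook a = Some o.
Definition progT (a b : TId) : Prop := a.1 = b.1 /\ (a.2 < b.2)%N.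

Definition delOrder (a b : TId) : Prop :=
  exists b1 x1 v1 s1 l1 b2 x2 v2 s2 l2,
    tlook a = Some (TDeliver b1 x1 v1 s1 l1) /\
    tlook b = Some (TDeliver b2 x2 v2 s2 l2) /\ progT b1 b2.

Definition tvalid (init : Var -> Val) (s : seq TId) : Prop :=
  valid_rw (fun a x v => tlook a = Some (TWrM x v))
           (fun a x v => tlook a = Some (TRdM x v)) init s /\
  valid_rw (fun a c n => tlook a = Some (TWrC c n))
           (fun a c n => tlook a = Some (TRdC c n)) (fun _ => 0%N) s /\
  (forall i j d b x v src lab, get s i = Some d ->
     tlook d = Some (TDeliver b x v src lab) -> get s j = Some b -> (j < i)%N) /\
  (forall i j d1 d2 b x v src lab, get s i = Some d1 -> get s j = Some d2 ->
     tlook d1 = Some (TDeliver b x v src lab) ->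
     tlook d2 = Some (TDeliver b x v src lab) -> i = j).

Definition delBefore (s : seq TId) (l : 'I_m) (b1 b2 : TId) : Prop :=
  exists d1 d2 x1 v1 s1 x2 v2 s2,
    tlook d1 = Some (TDeliver b1 x1 v1 s1 (Some l)) /\
    tlook d2 = Some (TDeliver b2 x2 v2 s2 (Some l)) /\ before s d1 d2.

(* POB(L) with L = 'I_m *)
Definition POB (init : Var -> Val) : Prop :=
  exists S : Proc -> seq TId,
    (forall p,
       enumerates (inO p) (S p) /\
       tvalid init (S p) /\
       (forall a b, inO p a -> inO p b -> (progT a b \/ delOrder a b) ->
                    before (S p) a b) /\
       (forall b x v src lab,
          tlook b = Some (TBcast x v src lab) <->
          exists d, inO p d /\ tlook d = Some (TDeliver b x v src lab))) /\
    (forall (l : 'I_m) p q b1 b2,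
       delBefore (S p) l b1 b2 <-> delBefore (S q) l b1 b2).
End Target.

From mathcomp Require Import all_boot zify.
From Stdlib Require Import ClassicalEpsilon.
Set Implicit Arguments. Unset Strict Implicit. Unset Printing Implicit Defensive.

(* Fix a computation of the transformed multiprogram together
   with the POB witness orders L_p.  For every process p we order the
   operations O_C|p ∪ O_C|wrts by a numeric key read off L_p:
   - a read of p sits at the position in L_p of the replica read
     Memory[p].x performed by its subroutine;
   - a write w sits at the position in L_p of the replica update done by
     the delivery thread of p right after delivering w's broadcast (or
     after the whole of L_p, when the computation stops in between).
   Validity of L_p on the replicas yields validity of these orders.
   Program order is preserved: between writes by FIFO delivery (delOrder),
   from a read to a later write because a broadcast precedes its
   deliveries, and from a write to a later read because of
   WaitWritesComplete: a counting argument on writes-requested and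
   writes-processed shows that the own write was applied before the read.
   Agreement on each V_i is inherited from agreement of POB on the
   deliveries labelled i. *)

Section Get.
Variable A : Type.
Implicit Types s : seq A.

Lemma get_some s i a : get s i = Some a -> i < size s.
Proof. by elim: s i => [|b s IH] [|i] //= /IH. Qed.

Lemma get_none s i : size s <= i -> get s i = None.
Proof. by elim: s i => [|b s IH] [|i] //= /IH. Qed.

Lemma get_none_inv s i : get s i = None -> size s <= i.
Proof. by elim: s i => [|b s IH] [|i] //= /IH. Qed.

Lemma get_exists s i : i < size s -> exists a, get s i = Some a.
Proof. by elim: s i => [|b s IH] [|i] //=; [exists b|move/IH]. Qed.

Lemma get_nth s i x0 : i < size s -> get s i = Some (nth x0 s i).
Proof. by elim: s i => [|b s IH] [|i] //= /IH. Qed.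

Lemma get_catL s1 s2 i : i < size s1 -> get (s1 ++ s2) i = get s1 i.
Proof. by elim: s1 i => [|b s IH] [|i] //= /IH. Qed.

Lemma get_catR s1 s2 i : size s1 <= i -> get (s1 ++ s2) i = get s2 (i - size s1).
Proof. by elim: s1 i => [|b s IH] [|i] //= /IH. Qed.

Lemma get_catR_add s1 s2 j : get (s1 ++ s2) (size s1 + j) = get s2 j.
Proof. by rewrite get_catR ?leq_addr // addKn. Qed.

Lemma get_take s n i a : get (take n s) i = Some a -> get s i = Some a.
Proof. by elim: s n i => [|b s IH] [|n] [|i] //= /IH. Qed.

Lemma get_take_lt s n i : i < n -> get (take n s) i = get s i.
Proof. elim: s n i => [|b s IH] [|n] [|i] //= H; exact: IH. Qed.
End Get.

Section GetEq.
Variable T : eqType.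
Implicit Types s : seq T.

Lemma get_mem s i a : get s i = Some a -> a \in s.
Proof.
elim: s i => [|b s IH] [|i] //=; first by move=> [->]; rewrite inE eqxx.
by move/IH => H; rewrite inE H orbT.
Qed.

Lemma mem_get s a : a \in s -> exists i, get s i = Some a.
Proof.
elim: s => [|b s IH] //=; rewrite inE => /orP [/eqP ->|/IH [i Hi]]; first by exists 0.
by exists i.+1.
Qed.

Lemma get_uniq s i j a : uniq s -> get s i = Some a -> get s j = Some a -> i = j.
Proof.
elim: s i j => [|b s IH] [|i] [|j] //= /andP [Hb Hu].
- by move=> [<-] /get_mem H; rewrite H in Hb.
- by move=> /get_mem H [Heq]; subst; rewrite H in Hb.
- by move=> H1 H2; rewrite (IH _ _ Hu H1 H2).
Qed.

Lemma before_uniqE s i j a b : uniq s -> get s i = Some a -> get s j = Some b ->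
  (before s a b <-> i < j).
Proof.
move=> Hu Ha Hb; split; last by move=> H; exists i, j.
by move=> [i' [j' [H [Ha' Hb']]]]; rewrite (get_uniq Hu Ha Ha') (get_uniq Hu Hb Hb').
Qed.

Lemma sort_by_key (key : T -> nat) s : uniq s -> {in s &, injective key} ->
  let s' := sort (fun a b => key a <= key b) s in
  [/\ uniq s', forall a, (a \in s') = (a \in s) &
      forall a b, a \in s -> b \in s -> (before s' a b <-> key a < key b)].
Proof.
move=> Hu Hinj s'.
have Hu' : uniq s' by rewrite sort_uniq.
have Hm : forall a, (a \in s') = (a \in s) by move=> a; rewrite mem_sort.
have Hs : sorted (fun a b => key a <= key b) s'.
  by apply: sort_sorted => a b; apply: leq_total.
have Hle i j x y : get s' i = Some x -> get s' j = Some y -> i <= j -> key x <= key y.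
  move=> Hi Hj Hij; have Hi' := get_some Hi; have Hj' := get_some Hj.
  rewrite (get_nth x) // in Hi; rewrite (get_nth x) // in Hj.
  case: Hi => <-; case: Hj => <-.
  have Htr : transitive (fun a b => key a <= key b) by move=> a b c; apply: leq_trans.
  by apply: (sorted_leq_nth Htr _ x Hs) => // a; apply: leqnn.
split=> // a b Ha Hb; split.
- move=> [i [j [Hij [Hi Hj]]]].
  rewrite ltn_neqAle (Hle _ _ _ _ Hi Hj (ltnW Hij)) andbT.
  apply/eqP => E; have Eab := Hinj _ _ Ha Hb E; subst b.
  by rewrite (get_uniq Hu' Hi Hj) ltnn in Hij.
- move=> Hk; rewrite -Hm in Ha; rewrite -Hm in Hb.
  have [i Hi] := mem_get Ha; have [j Hj] := mem_get Hb.
  exists i, j; split=> //; rewrite ltnNge; apply/negP => Hji.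
  by have := Hle _ _ _ _ Hj Hi Hji; rewrite leqNgt Hk.
Qed.
End GetEq.

Section Count.
Variable P : pred nat.

Lemma count_iotaS j : count P (iota 0 j.+1) = count P (iota 0 j) + P j.
Proof. by rewrite -addn1 iotaD count_cat /= addn0. Qed.

Lemma count_iota_split i j : i <= j ->
  count P (iota 0 j) = count P (iota 0 i) + count P (iota i (j - i)).
Proof. by move=> H; rewrite -{1}(subnKC H) iotaD count_cat. Qed.

Lemma count_iota_mono i j : i <= j -> count P (iota 0 i) <= count P (iota 0 j).
Proof. by move=> H; rewrite (count_iota_split H) leq_addr. Qed.

Lemma count_le1 (s : seq nat) c : (forall i, i \in s -> P i -> i = c) -> uniq s ->
  count P s <= 1.
Proof.
move=> H Hu; rewrite -size_filter.
have : {subset filter P s <= [:: c]}.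
  by move=> i; rewrite mem_filter => /andP [Hp Hi]; rewrite inE (H i Hi Hp).
by move/(uniq_leq_size (filter_uniq P Hu)).
Qed.
End Count.

Ltac get_cases := repeat match goal with
  | H : get (_ :: _) ?j = _ |- _ => destruct j; simpl in H
  | H : (match ?j with 0 => _ | _.+1 => _ end) = _ |- _ => destruct j; simpl in H
  end; simpl.

Section MainThread.
Variables (Var Val : Type) (Proc : finType) (m : nat).
Variables (blk : Var -> option 'I_m) (tau : Variant) (p : Proc).
Notation TOp := (TOp Var Val Proc m).
Notation SOp := (SOp Var Val).
Notation RdC := (@TRdC Var Val Proc m).
Notation WrC := (@TWrC Var Val Proc m).
Notation RdM := (@TRdM Var Val Proc m).
Notation WrM := (@TWrM Var Val Proc m).
Implicit Types (T ops w : seq TOp).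

Record MainOps T : Prop := {
  mo_wrc : forall j c n, get T j = Some (WrC c n) -> c = WR /\ 0 < j /\
        exists n', get T j.-1 = Some (RdC WR n') /\ n = n'.+1;
  mo_bcast : forall j x v s l, get T j = Some (TBcast x v s l) -> 0 < j /\
        exists n, get T j.-1 = Some (WrC WR n);
  mo_nodeliver : forall j b x v s l, get T j <> Some (TDeliver b x v s l);
  mo_noupdate : forall j x v, get T j <> Some (WrM x v) }.

Lemma MainOps_cat T1 T2 : MainOps T1 -> MainOps T2 -> MainOps (T1 ++ T2).
Proof.
case=> [W1 B1 D1 U1] [W2 B2 D2 U2].
have pred_shift j : size T1 <= j -> 0 < j - size T1 ->
    get (T1 ++ T2) j.-1 = get T2 (j - size T1).-1.
  by move=> Hj Hj0; rewrite get_catR; [congr get; lia|lia].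
split=> [j c n|j x v s l|j b x v s l|j x v]; case: (ltnP j (size T1)) => Hj.
- rewrite get_catL // => /W1 [-> [Hj0 [n' [H ->]]]]; split=> //; split=> //.
  by exists n'; rewrite get_catL //; lia.
- rewrite get_catR // => /W2 [-> [Hj0 [n' [H ->]]]]; split=> //; split; first lia.
  by exists n'; rewrite pred_shift.
- rewrite get_catL // => /B1 [Hj0 [n H]]; split=> //.
  by exists n; rewrite get_catL //; lia.
- rewrite get_catR // => /B2 [Hj0 [n H]]; split; first lia.
  by exists n; rewrite pred_shift.
- by rewrite get_catL.
- by rewrite get_catR.
- by rewrite get_catL.
- by rewrite get_catR.
Qed.

Lemma wait_reads w : Wait w -> forall j o, get w j = Some o ->
  exists (c : Ctr) (n : nat), o = RdC c n.
Proof.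
elim=> [a b _|a b rest _ _ IH] [|[|j]] o //=; last exact: IH.
all: by case=> <-; do 2 eexists.
Qed.

Lemma wait_MainOps w : Wait w -> MainOps w.
Proof.
move/wait_reads => Hr.
by split=> [j c n|j x v s l|j b x v s l|j x v] /Hr [c' [n' E]].
Qed.

Definition waitExit T e : Prop :=
  exists a b, get T e = Some (RdC WP a) /\ get T e.+1 = Some (RdC WR b) /\ b <= a.

Lemma wait_exits w : Wait w -> exists k, size w = k.+2 /\ waitExit w k.
Proof.
elim=> [a b Hab|a b rest _ _ [k [Ek Hk]]]; first by exists 0; split=> //; exists a, b.
by exists k.+2; rewrite /= Ek; split.
Qed.

Record BlockShape ops (o : SOp) (r : nat) : Prop := {
  bs_ops : MainOps ops;
  bs_r : r < size ops;
  bs_rd : forall x v, o = SRd x v -> get ops r = Some (RdM x v);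
  bs_wr : forall x v, o = SWr x v -> get ops r = Some (TBcast x v p (blk x));
  bs_bci : forall j x v s l, get ops j = Some (TBcast x v s l) -> j = r /\ o = SWr x v;
  bs_wait_after : tau = SWFR -> forall x v, o = SWr x v ->
      exists e, r < e /\ e.+1 < size ops /\ waitExit ops e;
  bs_wait_before : tau = FWSR -> forall x v, o = SRd x v ->
      exists e, e.+1 < r /\ waitExit ops e }.

Lemma write_prefix_MainOps x v n :
  MainOps [:: RdC WR n; WrC WR n.+1; TBcast x v p (blk x)].
Proof.
split=> [j c n'|j x' v' s l|j b x' v' s l|j x' v'] H; get_cases; try discriminate.
- by case: H => <- <-; split=> //; split=> //; exists n.
- by split=> //; exists n.+1.
Qed.

Lemma read_MainOps x v : MainOps [:: RdM x v].
Proof. by split=> [j c n|j x' v' s l|j b x' v' s l|j x' v'] H; get_cases. Qed.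

Lemma get_wait_then w o j o' : Wait w -> get (w ++ [:: o]) j = Some o' ->
  (j = size w /\ o' = o) \/ exists (c : Ctr) (n : nat), o' = RdC c n.
Proof.
move=> Hw; case: (ltnP j (size w)) => Hj.
  by rewrite get_catL // => /(wait_reads Hw); right.
rewrite get_catR //; case E: (j - size w) => [|k] //= [<-].
by left; split=> //; lia.
Qed.

Lemma subroutine_shape i ops o : Subroutine tau blk p i ops o -> exists r, BlockShape ops o r.
Proof.
case=> [x v Ht|x v n w Ht Hw|x v w Ht Hw|x v n Ht].
- exists 0; constructor=> //; last (by rewrite Ht).
  + exact: read_MainOps.
  + by move=> x' v' [<- <-].
  + by move=> [|j] x' v' s l //=.
- exists 2; constructor=> //.
  + exact: MainOps_cat (write_prefix_MainOps x v n) (wait_MainOps Hw).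
  + by move=> x' v' [<- <-].
  + move=> [|[|[|j]]] x' v' s l //= => [[<- <-]|] //.
    by move/(wait_reads Hw) => [? [?]].
  + move=> _ x' v' _; have [k [Ek He]] := wait_exits Hw.
    by exists k.+3; rewrite size_cat Ek; split=> //; split=> //; lia.
- exists (size w); constructor.
  + exact: MainOps_cat (wait_MainOps Hw) (read_MainOps x v).
  + by rewrite size_cat addn1.
  + by move=> x' v' [-> ->]; rewrite get_catR // subnn.
  + by move=> x' v'.
  + by move=> j x' v' s l /(get_wait_then Hw) [[_ ?]|[? [?]]].
  + by rewrite Ht.
  + move=> _ x' v' _; have [k [Ek He]] := wait_exits Hw.
    exists k; rewrite Ek; split=> //.
    by case: He => a [b [Ha [Hb Hab]]]; exists a, b; rewrite !get_catL ?Ek.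
- exists 2; constructor=> //.
  + exact: write_prefix_MainOps.
  + by move=> x' v' [<- <-].
  + by move=> [|[|[|j]]] x' v' s l //= [<- <-].
  + by rewrite Ht.
Qed.

Record MainShape T (os : seq SOp) (pos : nat -> nat) : Prop := {
  ms_ops : MainOps T;
  ms_mono : forall k1 k2, k1 < k2 -> k2 < size os -> pos k1 < pos k2;
  ms_rd : forall k x v, get os k = Some (SRd x v) -> get T (pos k) = Some (RdM x v);
  ms_wr : forall k x v, get os k = Some (SWr x v) ->
      get T (pos k) = Some (TBcast x v p (blk x));
  ms_bci : forall j x v s l, get T j = Some (TBcast x v s l) ->
      exists k, pos k = j /\ get os k = Some (SWr x v);
  ms_wait_after : tau = SWFR -> forall k x v, get os k = Some (SWr x v) ->
      exists e, pos k < e /\ (forall k', k < k' -> k' < size os -> e.+1 < pos k') /\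
      waitExit T e;
  ms_wait_before : tau = FWSR -> forall k x v, get os k = Some (SRd x v) ->
      exists e, e.+1 < pos k /\ (forall k', k' < k -> pos k' < e) /\ waitExit T e }.

Lemma waitExit_catL T1 T2 e : e.+1 < size T1 -> waitExit T1 e -> waitExit (T1 ++ T2) e.
Proof. by move=> He [a [b [Ha [Hb Hab]]]]; exists a, b; rewrite !get_catL //; lia. Qed.

Lemma waitExit_catR T1 T2 e : waitExit T2 e -> waitExit (T1 ++ T2) (size T1 + e).
Proof. by move=> [a [b [Ha [Hb Hab]]]]; exists a, b; rewrite -addnS !get_catR_add. Qed.

Lemma MainShape_cons ops o r T os pos : BlockShape ops o r -> MainShape T os pos ->
  MainShape (ops ++ T) (o :: os) (fun k => if k is k'.+1 then size ops + pos k' else r).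
Proof.
move=> Hb Hp; have Hr := bs_r Hb.
have gR j : size ops <= j -> get (ops ++ T) j = get T (j - size ops) by apply: get_catR.
constructor.
- exact: MainOps_cat (bs_ops Hb) (ms_ops Hp).
- case=> [|k1] [|k2] //= => [_ _|]; first lia.
  by rewrite !ltnS ltn_add2l; apply: (ms_mono Hp).
- case=> [|k] x v /=; last by rewrite get_catR_add; apply: (ms_rd Hp).
  by move=> [Ho]; rewrite get_catL // (bs_rd Hb Ho).
- case=> [|k] x v /=; last by rewrite get_catR_add; apply: (ms_wr Hp).
  by move=> [Ho]; rewrite get_catL // (bs_wr Hb Ho).
- move=> j x v s l; case: (ltnP j (size ops)) => Hj.
    by rewrite get_catL // => /(bs_bci Hb) [-> ->]; exists 0.
  rewrite gR // => /(ms_bci Hp) [k [Hk1 Hk2]]; exists k.+1; split=> //; lia.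
- move=> Ht [|k] x v /=.
    move=> [Ho]; have [e [H1 [H2 H3]]] := bs_wait_after Hb Ht Ho.
    by exists e; split=> //; split; [case=> // k' _ _; lia|exact: waitExit_catL].
  move=> Hk; have [e [H1 [H2 H3]]] := ms_wait_after Hp Ht Hk.
  exists (size ops + e); split; first lia.
  split; last exact: waitExit_catR.
  by case=> // k' H4 H5; have := H2 k' H4 H5; lia.
- move=> Ht [|k] x v /=.
    move=> [Ho]; have [e [H1 H3]] := bs_wait_before Hb Ht Ho.
    exists e; split=> //; split; first by case.
    by apply: waitExit_catL => //; lia.
  move=> Hk; have [e [H1 [H2 H3]]] := ms_wait_before Hp Ht Hk.
  exists (size ops + e); split; first lia.
  split; last exact: waitExit_catR.
  by case=> [|k'] H4; [lia|have := H2 k' H4; lia].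
Qed.

Lemma wait_between T os pos k1 k2 x v x' v' : MainShape T os pos -> k1 < k2 ->
  get os k1 = Some (SWr x v) -> get os k2 = Some (SRd x' v') ->
  exists e, pos k1 < e /\ e.+1 < pos k2 /\ waitExit T e.
Proof.
move=> HT Hk H1 H2; case Et: tau.
- have [e [A [B C]]] := ms_wait_after HT Et H1.
  by exists e; split=> //; split=> //; apply: B => //; apply: get_some H2.
- have [e [A [B C]]] := ms_wait_before HT Et H2.
  by exists e; split=> //; apply: B.
Qed.

Definition isBcast (o : option TOp) : bool :=
  if o is Some (TBcast _ _ _ _) then true else false.
Definition bcastsBefore T j : nat := count (fun i => isBcast (get T i)) (iota 0 j).

Lemma isBcastP o : isBcast o -> exists x v s l, o = Some (TBcast x v s l).
Proof. by case: o => [[]|] //= *; do 4 eexists. Qed.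

(* Each broadcast directly follows a write of writes-requested, so after
   the last such write at j1 at most one broadcast can occur ... *)
Lemma bcasts_since_request T j1 j n0 : MainOps T -> j1 <= j ->
  get T j1 = Some (WrC WR n0) ->
  (forall i n, j1 < i -> i < j -> get T i <> Some (WrC WR n)) ->
  bcastsBefore T j <= (bcastsBefore T j1).+1.
Proof.
move=> HT Hj Hj1 Hno; rewrite /bcastsBefore (count_iota_split _ Hj) -addn1 leq_add2l.
apply: (count_le1 (c := j1.+1)); last exact: iota_uniq.
move=> i; rewrite mem_iota subnKC // => /andP [Hi1 Hi2] /isBcastP [x [v [s [l Hb]]]].
have [Hi0 [n Hw]] := mo_bcast HT Hb.
case: (ltngtP i.-1 j1) => Hc; last lia.
- have Ei : i = j1 by lia.
  by rewrite Ei Hj1 in Hb.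
- by exfalso; apply: (Hno _ _ Hc _ Hw); lia.
Qed.

Lemma bcasts_before_request T j : MainOps T ->
  (forall i n, i < j -> get T i <> Some (WrC WR n)) -> bcastsBefore T j = 0.
Proof.
move=> HT Hno; apply/eqP; rewrite -leqn0 leqNgt -has_count; apply/hasPn => i.
rewrite mem_iota => /andP [_ Hi]; apply/negP => /isBcastP [x [v [s [l Hb]]]].
have [Hi0 [n Hw]] := mo_bcast HT Hb.
by apply: (Hno _ _ _ Hw); lia.
Qed.

Lemma main_shape iss T os : MainRun (Subroutine tau blk p) iss T os ->
  exists pos, MainShape T os pos.
Proof.
elim=> [|i ops o iss' T' os' Hsub _ [pos Hp]].
  by exists (fun _ => 0); split=> //; try case.
have [r Hb] := subroutine_shape Hsub.
by eexists; apply: MainShape_cons Hb Hp.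
Qed.
End MainThread.

Section DeliveryThread.
Variables (Var Val : Type) (Proc : finType) (m : nat) (p : Proc).
Notation TOp := (TOp Var Val Proc m).
Notation RdC := (@TRdC Var Val Proc m).
Notation WrC := (@TWrC Var Val Proc m).
Notation WrM := (@TWrM Var Val Proc m).
Implicit Types (D it : seq TOp).

Record DelivShape D : Prop := {
  ds_deliver : forall j b x v s l, get D j = Some (TDeliver b x v s l) ->
    get D j.+1 = None \/ get D j.+1 = Some (WrM x v);
  ds_update : forall j x v, get D j = Some (WrM x v) -> 0 < j /\
    exists b s l, get D j.-1 = Some (TDeliver b x v s l);
  ds_wrc : forall j c n, get D j = Some (WrC c n) -> c = WP /\ 2 < j /\
    (exists n', get D j.-1 = Some (RdC WP n') /\ n = n'.+1) /\
    (exists b x v l, get D (j - 3) = Some (TDeliver b x v p l));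
  ds_nobcast : forall j x v s l, get D j <> Some (TBcast x v s l) }.

Lemma iteration_shape it : DelivIter p it -> DelivShape it /\
  forall j b x v s l, get it j = Some (TDeliver b x v s l) -> j.+1 < size it.
Proof.
case=> [b x v lab n|b x v src lab Hsrc]; (split; [split|]); intros; try intro;
  get_cases; try discriminate;
  repeat match goal with H : Some _ = Some _ |- _ => injection H; clear H; intros end;
  subst; try discriminate; try done; try (by right); try (split; [done|do 3 eexists; reflexivity]).
split=> //; split=> //; split; [by exists n|by do 4 eexists].
Qed.

(* The shape survives truncation (the loop may stop mid-iteration) ... *)
Lemma DelivShape_take D n : DelivShape D -> DelivShape (take n D).
Proof.
case=> H1 H2 H3 H4.
have below j a : get (take n D) j = Some a -> j < n.
  by move=> H; have := get_some H; rewrite size_take_min; lia.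
split.
- move=> j b x v s l Hj; have Hjn := below _ _ Hj.
  case: (ltnP j.+1 n) => Hn; first by rewrite get_take_lt //; apply: H1; apply: get_take Hj.
  by left; apply: get_none; rewrite size_take_min; lia.
- move=> j x v Hj; have Hjn := below _ _ Hj.
  have [A [b [s [l B]]]] := H2 _ _ _ (get_take Hj).
  by split=> //; exists b, s, l; rewrite get_take_lt //; lia.
- move=> j c n0 Hj; have Hjn := below _ _ Hj.
  have [A [B [[n' [C D']] [b [x [v [l E]]]]]]] := H3 _ _ _ (get_take Hj).
  split=> //; split=> //; split; first by exists n'; rewrite get_take_lt //; lia.
  by exists b, x, v, l; rewrite get_take_lt //; lia.
- by move=> j x v s l H; exact: (H4 _ _ _ _ _ (get_take H)).
Qed.

Lemma DelivShape_cat D1 D2 : DelivShape D1 -> DelivShape D2 ->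
  (forall j b x v s l, get D1 j = Some (TDeliver b x v s l) -> j.+1 < size D1) ->
  DelivShape (D1 ++ D2).
Proof.
case=> H1 H2 H3 H4 [G1 G2 G3 G4] Hl.
have gL j : j < size D1 -> get (D1 ++ D2) j = get D1 j by apply: get_catL.
have gR j : size D1 <= j -> get (D1 ++ D2) j = get D2 (j - size D1) by apply: get_catR.
split.
- move=> j b x v s l; case: (ltnP j (size D1)) => Hj.
    by rewrite gL // => H; rewrite gL; [exact: H1 H|exact: Hl H].
  by rewrite !gR ?subSn //; [exact: G1|lia].
- move=> j x v; case: (ltnP j (size D1)) => Hj.
    rewrite gL // => /H2 [? [b [s [l B]]]]; split=> //; exists b, s, l; rewrite gL //; lia.
  rewrite gR // => /G2 [? [b [s [l B]]]]; split; first lia.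
  by exists b, s, l; rewrite gR -?predn_sub //; lia.
- move=> j c n; case: (ltnP j (size D1)) => Hj.
    rewrite gL // => /H3 [-> [A [[n' [B C]] [b [x [v [l E]]]]]]].
    split=> //; split=> //; split; first by exists n'; rewrite gL //; lia.
    by exists b, x, v, l; rewrite gL //; lia.
  rewrite gR // => /G3 [-> [A [[n' [B C]] [b [x [v [l E]]]]]]].
  split=> //; split; first lia; split.
    by exists n'; rewrite gR -?predn_sub //; lia.
  by exists b, x, v, l; rewrite gR -?subnDA ?(addnC 3) ?subnDA //; lia.
- move=> j x v s l; case: (ltnP j (size D1)) => Hj; [rewrite gL //|rewrite gR //]; by [apply: H4|apply: G4].
Qed.

Definition isOwn (o : option TOp) : bool :=
  if o is Some (TDeliver _ _ _ s _) then s == p else false.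
Definition ownDeliversBefore D j : nat := count (fun i => isOwn (get D i)) (iota 0 j).

Lemma isOwnP o : isOwn o -> exists b x v l, o = Some (TDeliver b x v p l).
Proof. by case: o => [[]|] //= b x v s l /eqP ->; do 4 eexists. Qed.

Lemma delivery_shape D : DelivRun p D -> DelivShape D.
Proof.
elim=> [|pre rest Hit|it ops Hit _ IH].
- by split=> //; case.
- have [H _] := iteration_shape Hit.
  by have := DelivShape_take (size pre) H; rewrite take_size_cat.
- have [H Hl] := iteration_shape Hit; exact: DelivShape_cat.
Qed.
End DeliveryThread.

Section Interpretation.
Variables (Var Val : Type) (Proc : finType) (m : nat) (blk : Var -> option 'I_m)
  (init : Var -> Val) (tau : Variant) (tc : Proc -> Thr -> seq (TOp Var Val Proc m))
  (sc : Proc -> seq (SOp Var Val)).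
Notation RdC := (@TRdC Var Val Proc m).
Notation WrC := (@TWrC Var Val Proc m).
Notation RdM := (@TRdM Var Val Proc m).
Notation WrM := (@TWrM Var Val Proc m).
Notation TId := (TId Proc).
Notation tl := (tlook tc).
Notation inO := (inO tc).

(* pos q k is the position in the main thread of q reflecting the k-th
   specified operation of q. *)
Variable pos : Proc -> nat -> nat.
Hypothesis main_ok : forall q, MainShape blk tau q (tc q Main) (sc q) (pos q).
Hypothesis deliv_ok : forall q, DelivShape q (tc q Deliv).

Variable L : Proc -> seq TId.
Hypothesis L_enum : forall p, enumerates (inO p) (L p).
Hypothesis L_valid : forall p, tvalid tc init (L p).
Hypothesis L_order : forall p a b, inO p a -> inO p b -> (progT a b \/ delOrder tc a b) ->
  before (L p) a b.
Hypothesis L_deliver : forall p b x v src lab, tl b = Some (TBcast x v src lab) <->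
  exists d, inO p d /\ tl d = Some (TDeliver b x v src lab).
Hypothesis L_agree : forall l p q b1 b2,
  delBefore tc (L p) l b1 b2 <-> delBefore tc (L q) l b1 b2.

Definition idx p (t : TId) : nat := epsilon (inhabits 0) (fun i => get (L p) i = Some t).

Lemma inO_L p i t : get (L p) i = Some t -> inO p t.
Proof. by move=> H; apply: (proj2 (proj2 (L_enum p) t)); exists i. Qed.

Lemma idxP p t : inO p t -> get (L p) (idx p t) = Some t.
Proof. by move=> /(proj1 (proj2 (L_enum p) t)); apply: epsilon_spec. Qed.

Lemma idx_eq p i t : get (L p) i = Some t -> idx p t = i.
Proof. by move=> H; exact: (proj1 (L_enum p)) (idxP (inO_L H)) H. Qed.

Lemma idx_size p t : inO p t -> idx p t < size (L p).
Proof. by move=> H; apply: get_some (idxP H). Qed.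

Lemma idx_inj p a b : inO p a -> inO p b -> idx p a = idx p b -> a = b.
Proof. by move=> /idxP Ha /idxP Hb E; rewrite E Hb in Ha; case: Ha. Qed.

Lemma beforeE p a b : inO p a -> inO p b -> (before (L p) a b <-> idx p a < idx p b).
Proof.
move=> Ha Hb; split; last by move=> H; exists (idx p a), (idx p b); rewrite !idxP.
by move=> [i [j [Hij [Hi Hj]]]]; rewrite (idx_eq Hi) (idx_eq Hj).
Qed.

Lemma idx_prog p a b : inO p a -> inO p b -> progT a b -> idx p a < idx p b.
Proof. by move=> Ha Hb H; apply/(beforeE Ha Hb); apply: L_order => //; left. Qed.

Lemma idx_del p a b : inO p a -> inO p b -> delOrder tc a b -> idx p a < idx p b.
Proof. by move=> Ha Hb H; apply/(beforeE Ha Hb); apply: L_order => //; right. Qed.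

Lemma idx_same_thread p a b : inO p a -> inO p b -> a.1 = b.1 ->
  idx p a < idx p b -> a.2 < b.2.
Proof.
move=> Ha Hb E Hlt; case: (ltngtP a.2 b.2) => // H.
- by have := idx_prog Hb Ha (conj (esym E) H); rewrite ltnNge ltnW.
- have Eab : a = b by move: E H; case: a {Ha Hlt} => [? ?]; case: b {Hb} => [? ?] /= -> ->.
  by rewrite Eab ltnn in Hlt.
Qed.

Lemma inO_at p th j o : tl (p, th, j) = Some o -> inO p (p, th, j).
Proof. by move=> H; split=> //; exists o. Qed.

Lemma valid_idx (Loc V : Type) (isW isR : TId -> Loc -> V -> Prop) (init0 : Loc -> V)
    p r l v :
  valid_rw isW isR init0 (L p) -> inO p r -> isR r l v ->
  (exists w, inO p w /\ idx p w < idx p r /\ isW w l v /\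
     forall w' v', inO p w' -> idx p w < idx p w' -> idx p w' < idx p r -> ~ isW w' l v')
  \/ ((forall w' v', inO p w' -> idx p w' < idx p r -> ~ isW w' l v') /\ v = init0 l).
Proof.
move=> Hv Hr HR; case: (Hv _ _ _ _ (idxP Hr) HR) => [[j [w [Hj [Hw [HW Hno]]]]]|[Hno ->]].
- left; exists w; rewrite (idx_eq Hw); split; first exact: inO_L Hw.
  by do 2 split=> //; move=> w' v' Hw' H1 H2; apply: Hno H1 H2 (idxP Hw').
- by right; split=> // w' v' Hw' H; apply: Hno H (idxP Hw').
Qed.

Lemma deliver_thread t b x v s l : tl t = Some (TDeliver b x v s l) -> t.1.2 = Deliv.
Proof. by case: t => [[q []] j] //= H; case: (mo_nodeliver (ms_ops (main_ok q)) H). Qed.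

Lemma update_thread t x v : tl t = Some (WrM x v) -> t.1.2 = Deliv.
Proof. by case: t => [[q []] j] //= H; case: (mo_noupdate (ms_ops (main_ok q)) H). Qed.

Lemma bcast_thread t x v s l : tl t = Some (TBcast x v s l) -> t.1.2 = Main.
Proof. by case: t => [[q []] j] //= H; case: (ds_nobcast (deliv_ok q) H). Qed.

Lemma requested_thread t n : tl t = Some (WrC WR n) -> t.1.2 = Main.
Proof. by case: t => [[q []] j] //= /(ds_wrc (deliv_ok q)) []. Qed.

Lemma processed_thread t n : tl t = Some (WrC WP n) -> t.1.2 = Deliv.
Proof. by case: t => [[q []] j] //= /(mo_wrc (ms_ops (main_ok q))) []. Qed.

Definition bcastOf (a : SId Proc) : TId := (a.1, Main, pos a.1 a.2).

Lemma bcastOf_tl a x v : slook sc a = Some (SWr x v) ->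
  tl (bcastOf a) = Some (TBcast x v a.1 (blk x)).
Proof. exact: (ms_wr (main_ok a.1)). Qed.

Lemma bcastOf_inj a1 a2 o1 o2 : slook sc a1 = Some o1 -> slook sc a2 = Some o2 ->
  bcastOf a1 = bcastOf a2 -> a1 = a2.
Proof.
case: a1 => q1 k1; case: a2 => q2 k2 /= H1 H2 [E1 E2]; subst q2.
case: (ltngtP k1 k2) => H; last by rewrite H.
- by have := ms_mono (main_ok q1) H (get_some H2); rewrite E2 ltnn.
- by have := ms_mono (main_ok q1) H (get_some H1); rewrite E2 ltnn.
Qed.

Lemma bcast_origin b x v s l : tl b = Some (TBcast x v s l) ->
  exists k, b = bcastOf (s, k) /\ get (sc s) k = Some (SWr x v) /\ l = blk x.
Proof.
move=> H; have Ht := bcast_thread H; move: H; case: b Ht => [[q th] j] /= -> H.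
have [k [/= Ek Hk]] := ms_bci (main_ok q) H.
move: H; rewrite /tlook /= -Ek (ms_wr (main_ok q) Hk) => -[<- <-].
by exists k.
Qed.

Definition deliverOf p (b : TId) : TId :=
  epsilon (inhabits (p, Main, 0))
    (fun d => inO p d /\ exists x v s l, tl d = Some (TDeliver b x v s l)).

Lemma deliverOfP p b x v s l : tl b = Some (TBcast x v s l) ->
  inO p (deliverOf p b) /\ tl (deliverOf p b) = Some (TDeliver b x v s l).
Proof.
move=> Hb; have [d [Hd Hdd]] := proj1 (L_deliver p b x v s l) Hb.
have [Hd' [x' [v' [s' [l' Hdd']]]]] : inO p (deliverOf p b) /\
    exists x v s l, tl (deliverOf p b) = Some (TDeliver b x v s l).
  apply: (epsilon_spec (inhabits (p, Main, 0))
    (fun d => inO p d /\ exists x v s l, tl d = Some (TDeliver b x v s l))).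
  by exists d; split=> //; exists x, v, s, l.
split=> //.
have : tl b = Some (TBcast x' v' s' l') by apply/(L_deliver p); exists (deliverOf p b).
by rewrite Hb => -[-> -> -> ->].
Qed.

Lemma deliverOf_uniq p d b x v s l : inO p d -> tl d = Some (TDeliver b x v s l) ->
  d = deliverOf p b.
Proof.
move=> Hd Hdd.
have Hb : tl b = Some (TBcast x v s l) by apply/(L_deliver p); exists d.
have [Hd' Hdd'] := deliverOfP p Hb.
have [_ [_ [_ Honce]]] := L_valid p.
exact: idx_inj Hd Hd' (Honce _ _ _ _ _ _ _ _ _ (idxP Hd) (idxP Hd') Hdd Hdd').
Qed.

Lemma deliverOf_write p a x v : slook sc a = Some (SWr x v) -> exists i,
  deliverOf p (bcastOf a) = (p, Deliv, i) /\
  get (tc p Deliv) i = Some (TDeliver (bcastOf a) x v a.1 (blk x)).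
Proof.
move=> Ha; have [Hin Hd] := deliverOfP p (bcastOf_tl Ha).
have Ht := deliver_thread Hd.
move: Hin Hd Ht; case: (deliverOf p (bcastOf a)) => [[q th] i] [/= Eq _] Hd /= Et.
by subst q th; exists i.
Qed.

Lemma deliverOf_inj p a1 a2 x1 v1 x2 v2 : slook sc a1 = Some (SWr x1 v1) ->
  slook sc a2 = Some (SWr x2 v2) ->
  deliverOf p (bcastOf a1) = deliverOf p (bcastOf a2) -> a1 = a2.
Proof.
move=> H1 H2 E.
have [i1 [E1 G1]] := deliverOf_write p H1; have [i2 [E2 G2]] := deliverOf_write p H2.
rewrite E1 E2 in E; case: E => ?; subst i2.
rewrite G1 in G2; injection G2 => _ _ _ _ Ep Eq.
by apply: (bcastOf_inj H1 H2); rewrite /bcastOf Ep Eq.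
Qed.

Notation bcasts p := (bcastsBefore (tc p Main)).
Notation ownDelivers p := (ownDeliversBefore p (tc p Deliv)).

Lemma requested_bound p j :
  (forall n, get (tc p Main) j = Some (RdC WR n) -> bcasts p j <= n) /\
  (forall n, get (tc p Main) j = Some (WrC WR n) -> bcasts p j < n).
Proof.
have HT := ms_ops (main_ok p); have Hv := proj1 (proj2 (L_valid p)).
elim/ltn_ind: j => j IH; split.
- move=> n Hr; have Hin : inO p (p, Main, j) := inO_at Hr.
  case: (valid_idx Hv Hin Hr) => [[w [Hw [Hlt [Hww Hno]]]]|[Hno ->]].
  + move: Hw Hlt Hww Hno (requested_thread Hww).
    case: w => [[q th] j1] [Eq _] Hlt Hww Hno Eth; simpl in Eq, Eth; subst q th.
    have Hj1 : j1 < j := idx_same_thread (inO_at Hww) Hin erefl Hlt.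
    have Hb := bcasts_since_request HT (ltnW Hj1) Hww.
    have Hn := proj2 (IH j1 Hj1) n Hww.
    suff : bcasts p j <= (bcasts p j1).+1 by lia.
    apply: Hb => i n' Hi1 Hi2 Hw'; have Hw'in : inO p (p, Main, i) := inO_at Hw'.
    have Hw1 : inO p (p, Main, j1) := inO_at Hww.
    by apply: (Hno _ _ Hw'in _ _ Hw'); apply: idx_prog => //; split.
  + rewrite (bcasts_before_request HT) // => i n' Hi Hw'.
    have Hw'in : inO p (p, Main, i) := inO_at Hw'.
    by apply: (Hno _ _ Hw'in _ Hw'); apply: idx_prog => //; split.
- move=> n Hw; have [_ [Hj0 [n' [Hr ->]]]] := mo_wrc HT Hw.
  have Hc := proj1 (IH j.-1 (ltac:(lia))) n' Hr.
  by rewrite -(prednK Hj0) /bcastsBefore count_iotaS Hr addn0 ltnS.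
Qed.

Lemma processed_bound p j n : get (tc p Deliv) j = Some (WrC WP n) ->
  n <= ownDelivers p (j - 2).
Proof.
have HD := deliv_ok p; have Hv := proj1 (proj2 (L_valid p)).
elim/ltn_ind: j n => j IH n Hw.
have [_ [Hj2 [[n' [Hr ->]] [b [x [v [l Hd]]]]]]] := ds_wrc HD Hw.
have -> : ownDelivers p (j - 2) = (ownDelivers p (j - 3)).+1.
  by rewrite (_ : j - 2 = (j - 3).+1) 1?/ownDeliversBefore ?count_iotaS ?Hd /= ?eqxx ?addn1 //; lia.
rewrite ltnS; have Hin : inO p (p, Deliv, j.-1) := inO_at Hr.
case: (valid_idx Hv Hin Hr) => [[w [Hwin [Hlt [Hww Hno]]]]|[_ ->]] //.
move: Hwin Hlt Hww Hno (processed_thread Hww).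
case: w => [[q th] j1] [Eq _] Hlt Hww Hno Eth; simpl in Eq, Eth; subst q th.
have Hj1 : j1 < j.-1 := idx_same_thread (inO_at Hww) Hin erefl Hlt.
have [_ [_ [[n1 [Hr1 _]] _]]] := ds_wrc HD Hww.
(* j - 3 holds the deliver and j - 2 the update, so j1 <= j - 4 *)
have Hj1' : j1 <= j - 4.
  case: (ltnP (j - 4) j1) => // Hc.
  have [E|E] : j1 = j - 3 \/ j1 = j - 2 by lia.
  - by move: Hww; rewrite /tlook /= E Hd.
  - by move: Hr1; rewrite (_ : j1.-1 = j - 3) ?Hd //; lia.
apply: leq_trans (IH j1 _ n' Hww) _; first lia.
by apply: count_iota_mono; lia.
Qed.

(* The own updates delivered to p before the deliver (at i) of the k1-th
   operation of p, a write, were broadcast before it (FIFO delivery) ... *)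
Lemma own_deliver_earlier p k1 x v i i' b x' v' l' :
  get (sc p) k1 = Some (SWr x v) ->
  deliverOf p (bcastOf (p, k1)) = (p, Deliv, i) -> i' < i ->
  get (tc p Deliv) i' = Some (TDeliver b x' v' p l') ->
  exists k, b = bcastOf (p, k) /\ get (sc p) k = Some (SWr x' v') /\ pos p k < pos p k1.
Proof.
move=> Hk1 Ed Hi' Hd'.
have Hd'in : inO p (p, Deliv, i') := inO_at Hd'.
have Hb : tl b = Some (TBcast x' v' p l') by apply/(L_deliver p); exists (p, Deliv, i').
have [k [Eb [Hk _]]] := bcast_origin Hb.
exists k; split=> //; split=> //.
have [i0 [Ed0 Hd]] := deliverOf_write p (a := (p, k1)) Hk1.
rewrite Ed in Ed0; case: Ed0 => ?; subst i0.
have Hdin : inO p (p, Deliv, i) := inO_at Hd.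
case: (ltngtP (pos p k) (pos p k1)) => // Hc; exfalso.
- have Hdo : delOrder tc (p, Deliv, i) (p, Deliv, i').
    by do 10 eexists; split; [exact: Hd|split; [exact: Hd'|rewrite Eb]].
  by have /= := idx_same_thread Hdin Hd'in erefl (idx_del Hdin Hd'in Hdo); lia.
- have := deliverOf_uniq Hd'in Hd'.
  by rewrite Eb /bcastOf /= Hc -/(bcastOf (p, k1)) Ed => -[]; lia.
Qed.

Lemma own_delivers_bound p k1 x v i : get (sc p) k1 = Some (SWr x v) ->
  deliverOf p (bcastOf (p, k1)) = (p, Deliv, i) ->
  ownDelivers p i <= bcasts p (pos p k1).
Proof.
move=> Hk1 Ed.
rewrite /ownDeliversBefore /bcastsBefore -!size_filter.
set own := filter _ (iota 0 i).
pose src i' := if get (tc p Deliv) i' is Some (TDeliver b _ _ _ _) then b.2 else 0.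
have Hown i' : i' \in own -> exists b x' v' l',
    get (tc p Deliv) i' = Some (TDeliver b x' v' p l') /\ i' < i.
  rewrite mem_filter mem_iota add0n => /andP [/isOwnP [b [x' [v' [l' ->]]]] /andP [_ Hi']].
  by exists b, x', v', l'.
have Hinj : {in own &, injective src}.
  move=> i1 i2 /Hown [b1 [x1 [v1 [l1 [D1 H1]]]]] /Hown [b2 [x2 [v2 [l2 [D2 H2]]]]].
  have [k1' [E1 _]] := own_deliver_earlier Hk1 Ed H1 D1.
  have [k2' [E2 _]] := own_deliver_earlier Hk1 Ed H2 D2.
  rewrite /src D1 D2 E1 E2 /= => Ek.
  have := deliverOf_uniq (inO_at D1) D1; have := deliverOf_uniq (inO_at D2) D2.
  by rewrite E1 E2 /bcastOf /= Ek => <- [].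
rewrite -(size_map src); apply: uniq_leq_size.
  by rewrite (map_inj_in_uniq Hinj) filter_uniq // iota_uniq.
move=> _ /mapP [i' /Hown [b [x' [v' [l' [D H]]]]] ->].
have [k [Eb [Hk Hlt]]] := own_deliver_earlier Hk1 Ed H D.
rewrite mem_filter mem_iota /src D Eb /= (ms_wr (main_ok p) Hk) Hlt.
by rewrite andbT.
Qed.

(* With SWFR the process waits after, with FWSR before, so that a read
   following a write of p comes after the writes-processed read at e by
   WaitWritesComplete; that read found the own update of the write already
   processed, i.e. an increment at j1 of the delivery thread, later than
   the update applying the write. *)
Lemma wait_sees_own_write p k1 x v e i : get (sc p) k1 = Some (SWr x v) ->
  pos p k1 < e -> waitExit (tc p Main) e ->
  deliverOf p (bcastOf (p, k1)) = (p, Deliv, i) ->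
  exists j1, i.+2 < j1 /\ inO p (p, Deliv, j1) /\ idx p (p, Deliv, j1) < idx p (p, Main, e).
Proof.
move=> Hk1 He [a [b [Ha [Hb Hab]]]] Ed.
have Hreq := proj1 (requested_bound p e.+1) b Hb.
have Hbc : bcasts p (pos p k1) < bcasts p e.+1.
  apply: (@leq_trans (bcasts p (pos p k1).+1)); last by apply: count_iota_mono; lia.
  by rewrite /bcastsBefore count_iotaS (ms_wr (main_ok p) Hk1) addn1.
have Hin : inO p (p, Main, e) := inO_at Ha.
case: (valid_idx (proj1 (proj2 (L_valid p))) Hin Ha) => [[w [Hwin [Hlt [Hww _]]]]|[_ Ea]];
  last by lia.
move: Hwin Hlt Hww (processed_thread Hww).
case: w => [[q th] j1] [Eq _] Hlt Hww Eth; simpl in Eq, Eth; subst q th.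
exists j1; split; last by split=> //; exact: inO_at Hww.
have /= Hproc := processed_bound Hww.
have Hown := own_delivers_bound Hk1 Ed.
rewrite ltnNge; apply/negP => Hc.
have : ownDelivers p (j1 - 2) <= ownDelivers p i by apply: count_iota_mono; lia.
lia.
Qed.

(* Position in L p of the update applying the write a in p; if the delivery
   thread stopped right after delivering a, a goes after all of L p. *)
Definition applyKey p (a : SId Proc) : nat :=
  let d := deliverOf p (bcastOf a) in
  if tl (d.1, d.2.+1) is Some _ then idx p (d.1, d.2.+1) else size (L p) + idx p d.

Definition key p (a : SId Proc) : nat :=
  match slook sc a with
  | Some (SRd _ _) => idx p (p, Main, pos p a.2)
  | Some (SWr _ _) => applyKey p a
  | None => 0
  end.

Definition inDom p a : Prop := inOs sc p a \/ isWrite sc a.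

Lemma inDom_cases p a : inDom p a ->
  (a.1 = p /\ exists x v, slook sc a = Some (SRd x v)) \/
  (exists x v, slook sc a = Some (SWr x v)).
Proof.
case=> [[E [[x v|x v] H]]|[x [v H]]]; first (by left; split=> //; exists x, v);
  by right; exists x, v.
Qed.

Lemma key_read p a x v : slook sc a = Some (SRd x v) -> a.1 = p ->
  key p a = idx p (p, Main, pos p a.2) /\ tl (p, Main, pos p a.2) = Some (RdM x v).
Proof. by move=> H E; rewrite /key H; split=> //; subst p; apply: (ms_rd (main_ok a.1)). Qed.

Lemma key_write p a x v : slook sc a = Some (SWr x v) -> exists i,
  deliverOf p (bcastOf a) = (p, Deliv, i) /\
  get (tc p Deliv) i = Some (TDeliver (bcastOf a) x v a.1 (blk x)) /\
  ((get (tc p Deliv) i.+1 = Some (WrM x v) /\ key p a = idx p (p, Deliv, i.+1)) \/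
   (get (tc p Deliv) i.+1 = None /\ key p a = size (L p) + idx p (p, Deliv, i))).
Proof.
move=> Ha; have [i [Ed Hd]] := deliverOf_write p Ha.
exists i; split=> //; split=> //.
rewrite /key Ha /applyKey Ed /tlook /=.
by case: (ds_deliver (deliv_ok p) Hd) => ->; [right|left].
Qed.

Lemma key_write_lt p a1 a2 x1 v1 x2 v2 i1 i2 :
  slook sc a1 = Some (SWr x1 v1) -> slook sc a2 = Some (SWr x2 v2) ->
  deliverOf p (bcastOf a1) = (p, Deliv, i1) -> deliverOf p (bcastOf a2) = (p, Deliv, i2) ->
  i1 < i2 -> key p a1 < key p a2.
Proof.
move=> H1 H2 E1 E2 Hi.
have [i1' [E1' [G1 C1]]] := key_write p H1; rewrite E1 in E1'; case: E1' => ?; subst i1'.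
have [i2' [E2' [G2 C2]]] := key_write p H2; rewrite E2 in E2'; case: E2' => ?; subst i2'.
case: C1 => [[W1 ->]|[W1 ->]]; case: C2 => [[W2 ->]|[W2 ->]].
- by apply: idx_prog; [apply: inO_at W1|apply: inO_at W2|split].
- by have := idx_size (inO_at W1); lia.
- by have := get_some G2; have := get_none_inv W1; lia.
- by rewrite ltn_add2l; apply: idx_prog; [apply: inO_at G1|apply: inO_at G2|split].
Qed.

Lemma key_writeE p a1 a2 x1 v1 x2 v2 i1 i2 :
  slook sc a1 = Some (SWr x1 v1) -> slook sc a2 = Some (SWr x2 v2) ->
  deliverOf p (bcastOf a1) = (p, Deliv, i1) -> deliverOf p (bcastOf a2) = (p, Deliv, i2) ->
  (key p a1 < key p a2 <-> i1 < i2).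
Proof.
move=> H1 H2 E1 E2; split; last exact: (key_write_lt H1 H2 E1 E2).
move=> Hk; case: (ltngtP i1 i2) => // Hc.
- by have := key_write_lt H2 H1 E2 E1 Hc; lia.
- subst i2; have E : a1 = a2 := deliverOf_inj H1 H2 (etrans E1 (esym E2)).
  by subst a2; rewrite ltnn in Hk.
Qed.

Lemma key_write_below_read p r x v w x' v' : slook sc r = Some (SRd x v) -> r.1 = p ->
  slook sc w = Some (SWr x' v') -> key p w < key p r ->
  exists i, key p w = idx p (p, Deliv, i.+1) /\ tl (p, Deliv, i.+1) = Some (WrM x' v').
Proof.
move=> Hr Eq Hw; have [-> R1] := key_read Hr Eq.
have [i [_ [_ [[W ->]|[W ->]]]]] := key_write p Hw; first by exists i.
by have := idx_size (inO_at R1); lia.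
Qed.

Lemma key_inj p a b : inDom p a -> inDom p b -> key p a = key p b -> a = b.
Proof.
have read_write a0 b0 x v x' v' : a0.1 = p -> slook sc a0 = Some (SRd x v) ->
    slook sc b0 = Some (SWr x' v') -> key p a0 <> key p b0.
  move=> Eq Ha Hb; have [-> R1] := key_read Ha Eq.
  have [i [_ [_ [[W ->]|[W ->]]]]] := key_write p Hb.
  - by move/(idx_inj (inO_at R1) (inO_at W)).
  - by have := idx_size (inO_at R1); lia.
case/inDom_cases => [[Eq [x [v Ha]]]|[x [v Ha]]];
  case/inDom_cases => [[Eq' [x' [v' Hb]]]|[x' [v' Hb]]].
- have [-> R1] := key_read Ha Eq; have [-> R2] := key_read Hb Eq'.
  move/(idx_inj (inO_at R1) (inO_at R2)) => [E].
  have : bcastOf a = bcastOf b by rewrite /bcastOf Eq Eq' E.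
  exact: bcastOf_inj Ha Hb.
- by move/(read_write _ _ _ _ _ _ Eq Ha Hb).
- by move/esym/(read_write _ _ _ _ _ _ Eq' Hb Ha).
- have [i1 [E1 _]] := key_write p Ha; have [i2 [E2 _]] := key_write p Hb.
  move=> Ek; case: (ltngtP i1 i2) => Hc.
  + by have := key_write_lt Ha Hb E1 E2 Hc; rewrite Ek ltnn.
  + by have := key_write_lt Hb Ha E2 E1 Hc; rewrite Ek ltnn.
  + by subst i2; apply: (deliverOf_inj Ha Hb (etrans E1 (esym E2))).
Qed.

(* A broadcast precedes its deliveries, hence its application. *)
Lemma key_read_then_write p k1 k2 x v x' v' : k1 < k2 ->
  get (sc p) k1 = Some (SRd x v) -> get (sc p) k2 = Some (SWr x' v') ->
  key p (p, k1) < key p (p, k2).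
Proof.
move=> Hk H1 H2.
have /= [-> R1] := key_read (a := (p, k1)) H1 erefl.
have [i [_ [G C]]] := key_write p (a := (p, k2)) H2.
have Hbin : inO p (bcastOf (p, k2)) := inO_at (bcastOf_tl (a := (p, k2)) H2).
have Hdin : inO p (p, Deliv, i) := inO_at G.
have H1b : idx p (p, Main, pos p k1) < idx p (bcastOf (p, k2)).
  apply: idx_prog; [exact: inO_at R1|exact: Hbin|split=> //=; rewrite /bcastOf /=].
  exact: ms_mono (main_ok p) _ _ Hk (get_some H2).
have Hbd : idx p (bcastOf (p, k2)) < idx p (p, Deliv, i).
  have [_ [_ [Hbcast _]]] := L_valid p.
  exact: Hbcast _ _ _ _ _ _ _ _ (idxP Hdin) G (idxP Hbin).
case: C => [[W ->]|[W ->]]; last by have := idx_size (inO_at R1); lia.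
apply: ltn_trans H1b (ltn_trans Hbd _).
by apply: idx_prog; [exact: Hdin|exact: inO_at W|split].
Qed.

(* WaitWritesComplete between them applies a write before a later read. *)
Lemma key_write_then_read p k1 k2 x v x' v' : k1 < k2 ->
  get (sc p) k1 = Some (SWr x v) -> get (sc p) k2 = Some (SRd x' v') ->
  key p (p, k1) < key p (p, k2).
Proof.
move=> Hk H1 H2.
have /= [-> Hrd] := key_read (a := (p, k2)) H2 erefl.
have [e [He1 [He2 Hexit]]] := wait_between (main_ok p) Hk H1 H2.
have [i [Ed [_ C]]] := key_write p (a := (p, k1)) H1.
have [j1 [Hij [Hj1 Hj1e]]] := wait_sees_own_write H1 He1 Hexit Ed.
have [a [b [Ha _]]] := Hexit.
case: C => [[W ->]|[W _]]; last first.
  by case: Hj1 => _ [o Ho]; have := get_some Ho; have := get_none_inv W; rewrite /=; lia.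
apply: (@ltn_trans (idx p (p, Deliv, j1))).
  by apply: idx_prog; [exact: inO_at W|exact: Hj1|split=> //=; lia].
apply: ltn_trans Hj1e _.
have Hein : inO p (p, Main, e) := inO_at Ha.
by apply: idx_prog; [exact: Hein|exact: inO_at Hrd|split=> //=; lia].
Qed.

Lemma key_prog p a b : inDom p a -> inDom p b -> progS a b -> key p a < key p b.
Proof.
case: a => q k1; case: b => q' k2 Da Db [/= Eq Hk]; subst q'.
case/inDom_cases: Da => [[/= Eq [x [v Ha]]]|[x [v Ha]]];
case/inDom_cases: Db => [[/= Eq' [x' [v' Hb]]]|[x' [v' Hb]]].
- subst q; have [-> R1] := key_read Ha erefl; have [-> R2] := key_read Hb erefl.
  apply: idx_prog; [exact: inO_at R1|exact: inO_at R2|split=> //=].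
  exact: ms_mono (main_ok p) _ _ Hk (get_some Hb).
- by subst q; exact: key_read_then_write Hk Ha Hb.
- by subst q; exact: key_write_then_read Hk Ha Hb.
- have [i1 [E1 [G1 _]]] := key_write p Ha; have [i2 [E2 [G2 _]]] := key_write p Hb.
  apply/(key_writeE Ha Hb E1 E2).
  have Hd1 : inO p (p, Deliv, i1) := inO_at G1.
  have Hd2 : inO p (p, Deliv, i2) := inO_at G2.
  have Hdo : delOrder tc (p, Deliv, i1) (p, Deliv, i2).
    do 10 eexists; split; [exact: G1|split; [exact: G2|split=> //=]].
    exact: ms_mono (main_ok q) _ _ Hk (get_some Hb).
  exact: idx_same_thread Hd1 Hd2 erefl (idx_del Hd1 Hd2 Hdo).
Qed.

Lemma update_source p u x v : inO p u -> tl u = Some (WrM x v) ->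
  exists w, slook sc w = Some (SWr x v) /\ key p w = idx p u.
Proof.
move=> Hu Huw; move: Hu Huw (update_thread Huw).
case: u => [[q th] e] [Eq _] Huw Eth; simpl in Eq, Eth; subst q th.
have [He [b [s [l Hd]]]] := ds_update (deliv_ok p) Huw.
have Hdin : inO p (p, Deliv, e.-1) := inO_at Hd.
have Hb : tl b = Some (TBcast x v s l) by apply/(L_deliver p); exists (p, Deliv, e.-1).
have [k [Eb [Hk _]]] := bcast_origin Hb.
exists (s, k); split=> //.
have [i [Ed [_ C]]] := key_write p (a := (s, k)) Hk.
have := deliverOf_uniq Hdin Hd; rewrite Eb Ed => -[Ei].
rewrite -Ei prednK // in C.
by case: C => [[_ ->]|[W _]] //; move: Huw; rewrite /tlook /= W.
Qed.

Lemma key_valid p r x v : inDom p r -> slook sc r = Some (SRd x v) ->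
  (exists w, inDom p w /\ slook sc w = Some (SWr x v) /\ key p w < key p r /\
     forall w' v', inDom p w' -> slook sc w' = Some (SWr x v') ->
       key p w < key p w' -> key p w' < key p r -> False)
  \/ ((forall w' v', inDom p w' -> slook sc w' = Some (SWr x v') ->
         key p w' < key p r -> False) /\ v = init x).
Proof.
move=> Dr Hr.
have Eq : r.1 = p by case/inDom_cases: Dr => [[]|[x' [v' H]]] //; rewrite Hr in H.
have [Ek R1] := key_read Hr Eq.
(* a write below r has been applied in p, so it is visible to L p *)
have applied w' v' : slook sc w' = Some (SWr x v') -> key p w' < key p r ->
    exists i, key p w' = idx p (p, Deliv, i.+1) /\ inO p (p, Deliv, i.+1) /\
      tl (p, Deliv, i.+1) = Some (WrM x v').
  move=> Hw' Hlt; have [i [Ki Wi]] := key_write_below_read Hr Eq Hw' Hlt.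
  by exists i; do 2 split=> //; exact: inO_at Wi.
case: (valid_idx (proj1 (L_valid p)) (inO_at R1) R1) => [[u [Hu [Hlt [Huw Hno]]]]|[Hno ->]].
- left; have [w [Hw Kw]] := update_source Hu Huw.
  exists w; split; first by right; exists x, v.
  split=> //; split; first by rewrite Kw Ek.
  move=> w' v' _ Hw' H1 H2; have [i [Ki [Hin Wi]]] := applied _ _ Hw' H2.
  by apply: (Hno _ _ Hin _ _ Wi); rewrite -?Ek -?Kw -Ki.
- right; split=> // w' v' _ Hw' H2; have [i [Ki [Hin Wi]]] := applied _ _ Hw' H2.
  by apply: (Hno _ _ Hin _ Wi); rewrite -Ek -Ki.
Qed.

Lemma key_delBefore p (l : 'I_m) w1 w2 x1 v1 x2 v2 :
  slook sc w1 = Some (SWr x1 v1) -> blk x1 = Some l ->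
  slook sc w2 = Some (SWr x2 v2) -> blk x2 = Some l ->
  (key p w1 < key p w2 <-> delBefore tc (L p) l (bcastOf w1) (bcastOf w2)).
Proof.
move=> Hw1 Hl1 Hw2 Hl2.
have [i1 [E1 [G1 _]]] := key_write p Hw1; have [i2 [E2 [G2 _]]] := key_write p Hw2.
rewrite Hl1 in G1; rewrite Hl2 in G2.
have Hd1 : inO p (p, Deliv, i1) := inO_at G1.
have Hd2 : inO p (p, Deliv, i2) := inO_at G2.
rewrite (key_writeE Hw1 Hw2 E1 E2); split.
- move=> Hlt; exists (p, Deliv, i1), (p, Deliv, i2).
  do 6 eexists; split; first exact: G1.
  split; first exact: G2.
  by apply/(beforeE Hd1 Hd2); apply: idx_prog => //; split.
- move=> [d1 [d2 [y1 [u1 [s1 [y2 [u2 [s2 [D1 [D2 Hbf]]]]]]]]]].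
  have [j1 [j2 [_ [Gj1 Gj2]]]] := Hbf.
  have Hd1' := inO_L Gj1; have Hd2' := inO_L Gj2.
  have := deliverOf_uniq Hd1' D1; have := deliverOf_uniq Hd2' D2.
  rewrite E1 E2 => ? ?; subst d1 d2.
  exact: (idx_same_thread Hd1 Hd2 erefl (proj1 (beforeE Hd1 Hd2) Hbf)).
Qed.

Definition isWriteb (a : SId Proc) : bool :=
  if slook sc a is Some (SWr _ _) then true else false.

Definition allOps : seq (SId Proc) :=
  [seq (q, k) | q <- enum Proc, k <- iota 0 (size (sc q))].

Definition specOrder p : seq (SId Proc) :=
  sort (fun a b => key p a <= key p b)
       (undup [seq a <- allOps | (a.1 == p) || isWriteb a]).

Lemma mem_domain p a : a \in undup [seq a <- allOps | (a.1 == p) || isWriteb a] <-> inDom p a.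
Proof.
rewrite mem_undup mem_filter.
have -> : (a \in allOps) = (a.2 < size (sc a.1)).
  apply/allpairsPdep/idP; first by move=> [q [k [_ Hk ->]]]; rewrite mem_iota in Hk.
  by move=> H; exists a.1, a.2; rewrite mem_enum mem_iota add0n H; case: a {H}.
split.
- move=> /andP [/orP [/eqP E|W] Hs].
  + by left; split=> //; apply: get_exists Hs.
  + right; move: W; rewrite /isWriteb /isWrite.
    by case: (slook sc a) => [[x v|x v]|] // _; exists x, v.
- case=> [[E [o Ho]]|[x [v Ho]]]; apply/andP; split; try exact: get_some Ho.
  + by rewrite E eqxx.
  + by rewrite /isWriteb Ho orbT.
Qed.

Lemma specOrder_spec p : [/\ uniq (specOrder p), forall a, a \in specOrder p <-> inDom p a &
  forall a b, inDom p a -> inDom p b -> (before (specOrder p) a b <-> key p a < key p b)].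
Proof.
have Hinj : {in undup [seq a <- allOps | (a.1 == p) || isWriteb a] &, injective (key p)}.
  by move=> a b /mem_domain Ha /mem_domain Hb; apply: key_inj.
have [U M Bf] := sort_by_key (undup_uniq _) Hinj.
split=> // [a|a b /mem_domain Ha /mem_domain Hb]; last exact: Bf.
by rewrite M; apply: mem_domain.
Qed.

Lemma specOrder_valid p : svalid sc init (specOrder p).
Proof.
have [U M Bf] := specOrder_spec p.
have getD i a : get (specOrder p) i = Some a -> inDom p a by move/get_mem/M.
move=> k r l v Hr Hrd.
case: (key_valid (getD _ _ Hr) Hrd) => [[w [Dw [Hw [Hlt Hno]]]]|[Hno ->]].
- left; have [i [j [Hij [Gi Gj]]]] : before (specOrder p) w r by apply/Bf => //; exact: getD Hr.
  rewrite (get_uniq U Gj Hr) in Hij.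
  exists i, w; do 3 split=> //; move=> j' w' v' H1 H2 Gw' Hw'.
  have Dw' := getD _ _ Gw'.
  apply: (Hno w' v' Dw' Hw').
  + by apply/(Bf _ _ Dw Dw'); apply/(before_uniqE U Gi Gw').
  + by apply/(Bf _ _ Dw' (getD _ _ Hr)); apply/(before_uniqE U Gw' Hr).
- right; split=> // j w v' Hj Gw Hw.
  have Dw := getD _ _ Gw.
  apply: (Hno w v' Dw Hw).
  by apply/(Bf _ _ Dw (getD _ _ Hr)); apply/(before_uniqE U Gw Hr).
Qed.

Lemma PC_of_POB : PC sc blk init.
Proof.
exists specOrder; split.
- move=> p; have [U M Bf] := specOrder_spec p.
  split; [split|split].
  + by move=> i j a; apply: get_uniq.
  + by move=> a; split=> [/M/mem_get|[i /get_mem/M]].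
  + exact: specOrder_valid.
  + by move=> a b Da Db Hab; apply/(Bf _ _ Da Db); exact: key_prog.
- move=> l p q w1 w2 [x1 [v1 [H1 L1]]] [x2 [v2 [H2 L2]]].
  have Dw1 r : inDom r w1 by right; exists x1, v1.
  have Dw2 r : inDom r w2 by right; exists x2, v2.
  have [_ _ Bp] := specOrder_spec p; have [_ _ Bq] := specOrder_spec q.
  rewrite (Bp _ _ (Dw1 p) (Dw2 p)) (Bq _ _ (Dw1 q) (Dw2 q)).
  by rewrite !(key_delBefore _ H1 L1 H2 L2); apply: L_agree.
Qed.
End Interpretation.

Theorem mainTheorem1 (Var Val : Type) (Proc : finType) (m : nat)
    (blk : Var -> option 'I_m)
    (Hpart : forall i : 'I_m, exists x, blk x = Some i)
    (init : Var -> Val) (prog : Proc -> seq (SInv Var Val))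
    (tau : Variant)
    (tc : Proc -> Thr -> seq (TOp Var Val Proc m))
    (sc : Proc -> seq (SOp Var Val)) :
  (forall p, MainRun (Subroutine tau blk p) (prog p) (tc p Main) (sc p)) ->
  (forall p, DelivRun p (tc p Deliv)) ->
  POB tc init ->
  PC sc blk init.
Proof.
move=> Hmain Hdeliv [L [HL Hagree]].
pose pos q := epsilon (inhabits (fun _ : nat => 0)) (MainShape blk tau q (tc q Main) (sc q)).
have Hpos q : MainShape blk tau q (tc q Main) (sc q) (pos q).
  by apply: epsilon_spec; apply: main_shape (Hmain q).
apply: (@PC_of_POB _ _ _ _ blk init tau tc sc pos Hpos
          (fun q => delivery_shape (Hdeliv q)) L) => //.
- by move=> p; case: (HL p).
- by move=> p; case: (HL p) => _ [].
- by move=> p; case: (HL p) => _ [_ []].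
- by move=> p; case: (HL p) => _ [_ [_ H]].
Qed.
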